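(* Let $f: A \to B$ be a ring homomorphism; view right $B$-modules as right $A$-modules by restriction of scalars along $f$. Then $f$ is a ring epimorphism if and only if both of the following hold: (a) for all finitely generated right $B$-modules $M, N$ one has $\mathrm{Hom}_A(M,N) = \mathrm{Hom}_B(M,N)$ (i.e. every $A$-linear map $M \to N$ is $B$-linear); (b) for every right $B$-module $L$ and every $A$-linear map $\psi: B \to L$, the image $\mathrm{Im}\,\psi$ is contained in a finitely generated $B$-submodule of $L$.
   Context: All rings are unital. A ring homomorphism $\varphi: R \to S$ is a ring epimorphism if for any two ring homomorphisms $\varrho_1, \varrho_2: S \to T$ with $\varrho_1\varphi = \varrho_2\varphi$ one has $\varrho_1 = \varrho_2$. *)

From HB Require Import structures.
From mathcomp Require Import all_boot all_order all_algebra.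
Set Implicit Arguments. Unset Strict Implicit. Unset Printing Implicit Defensive.
Import GRing.Theory.
Local Open Scope ring_scope.

(* Rings are unital, possibly noncommutative (pzRingType).
   A right B-module is a left module over the converse ring B^c:
   the right action m.b is written  (b : B^c) *: m . *)

Definition ring_epi (A B : pzRingType) (f : {rmorphism A -> B}) : Prop :=
  forall (T : pzRingType) (r1 r2 : {rmorphism B -> T}),
    (forall a : A, r1 (f a) = r2 (f a)) -> forall b : B, r1 b = r2 b.

Definition A_linear (A B : pzRingType) (f : {rmorphism A -> B})
    (M N : lmodType (B^c)) (g : M -> N) : Prop :=
  (forall x y : M, g (x + y) = g x + g y) /\
  (forall (a : A) (m : M), g ((f a : B^c) *: m) = (f a : B^c) *: g m).

Definition B_linear (B : pzRingType) (M N : lmodType (B^c)) (g : M -> N) : Prop :=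
  (forall x y : M, g (x + y) = g x + g y) /\
  (forall (b : B^c) (m : M), g (b *: m) = b *: g m).

Definition in_span (B : pzRingType) (M : lmodType (B^c)) (n : nat)
    (v : 'I_n -> M) (x : M) : Prop :=
  exists c : 'I_n -> B^c, x = \sum_(i < n) c i *: v i.

Definition fin_gen (B : pzRingType) (M : lmodType (B^c)) : Prop :=
  exists (n : nat) (v : 'I_n -> M), forall x : M, in_span v x.

From HB Require Import structures.
From mathcomp Require Import all_boot all_order all_algebra.
From mathcomp Require Import boolp.
Set Implicit Arguments. Unset Strict Implicit. Unset Printing Implicit Defensive.
Import GRing.Theory.
Local Open Scope ring_scope.

(* Forward direction: for an additive g : M -> N the shear
   (m, n) |-> (m, n + g m) is an invertible additive endomorphism of M x N,
   and it commutes with the action of b on M x N exactly when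
   g (m b) = g (m) b.  Conjugating the action morphism B -> End(M x N) by the
   shear gives a second ring morphism, which agrees with the first on f(A)
   when g is A-linear, hence everywhere when f is an epimorphism.
   Condition (b) follows since a B-linear map out of B has image generated by
   the image of 1.
   Converse: given r1, r2 : B -> T agreeing on f(A), make T a right B-module
   through r2.  Then r1 is A-linear, so by (b) it lands in a finitely generated
   submodule, and by (a) it is B-linear: r1 b = r1 1 * r2 b = r2 b. *)

Section AdditiveEndomorphisms.
Variable V : zmodType.

Record add_end := AddEnd {
  add_end_fun :> V -> V;
  _ : `[< {morph add_end_fun : x y / x + y} >]
}.

HB.instance Definition _ := [isSub for add_end_fun].
HB.instance Definition _ := gen_eqMixin add_end.
HB.instance Definition _ := gen_choiceMixin add_end.

Definition add_end_of (h : V -> V) (hD : {morph h : x y / x + y}) :=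
  AddEnd (asboolT hD).

Lemma add_endD (h : add_end) : {morph h : x y / x + y}.
Proof. by case: h => h /= /asboolP. Qed.

Lemma add_end_ext (h1 h2 : add_end) : h1 =1 h2 -> h1 = h2.
Proof. by move=> eq_h; apply/val_inj/funext. Qed.

Definition end0 := @add_end_of (fun=> 0) (fun _ _ => esym (addr0 0)).
Definition end1 := @add_end_of id (fun _ _ => erefl).
Definition end_add (h1 h2 : add_end) :=
  @add_end_of (fun x => h1 x + h2 x)
    (fun x y => ltac:(by rewrite /= !add_endD addrACA)).
Definition end_opp (h : add_end) :=
  @add_end_of (fun x => - h x) (fun x y => ltac:(by rewrite /= add_endD opprD)).
(* Composition in diagram order, so that a right B-module is a ring morphism
   from B into this ring. *)
Definition end_mul (h1 h2 : add_end) :=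
  @add_end_of (h2 \o h1) (fun x y => ltac:(by rewrite /= !add_endD)).

Lemma end_addA : associative end_add.
Proof. by move=> *; apply: add_end_ext => x /=; rewrite addrA. Qed.
Lemma end_addC : commutative end_add.
Proof. by move=> *; apply: add_end_ext => x /=; rewrite addrC. Qed.
Lemma end_add0 : left_id end0 end_add.
Proof. by move=> *; apply: add_end_ext => x /=; rewrite add0r. Qed.
Lemma end_addN : left_inverse end0 end_opp end_add.
Proof. by move=> *; apply: add_end_ext => x /=; rewrite addNr. Qed.
HB.instance Definition _ :=
  GRing.isZmodule.Build add_end end_addA end_addC end_add0 end_addN.

Lemma end_mulA : associative end_mul.
Proof. by move=> *; apply: add_end_ext. Qed.
Lemma end_mul1 : left_id end1 end_mul.
Proof. by move=> *; apply: add_end_ext. Qed.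
Lemma end_mulr1 : right_id end1 end_mul.
Proof. by move=> *; apply: add_end_ext. Qed.
Lemma end_mulDl : left_distributive end_mul end_add.
Proof. by move=> h1 h2 h3; apply: add_end_ext => x /=; rewrite add_endD. Qed.
Lemma end_mulDr : right_distributive end_mul end_add.
Proof. by move=> *; apply: add_end_ext. Qed.
HB.instance Definition _ := GRing.Zmodule_isPzRing.Build add_end
  end_mulA end_mul1 end_mulr1 end_mulDl end_mulDr.

Lemma add_endBE (h1 h2 : add_end) x : (h1 - h2) x = h1 x - h2 x.
Proof. by []. Qed.
Lemma add_endME (h1 h2 : add_end) x : (h1 * h2) x = h2 (h1 x).
Proof. by []. Qed.
Lemma add_end1E x : (1 : add_end) x = x.
Proof. by []. Qed.

End AdditiveEndomorphisms.

Section ConjugateMorphism.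
Variables (B T : pzRingType) (phi : {rmorphism B -> T}) (u u' : T).
Hypotheses (uK : u * u' = 1) (u'K : u' * u = 1).

Definition conj_rmorph (b : B) := u' * phi b * u.

Lemma conj_rmorph_is_zmod_morphism : zmod_morphism conj_rmorph.
Proof. by move=> x y; rewrite /conj_rmorph rmorphB mulrBr mulrBl. Qed.

Lemma conj_rmorph_is_monoid_morphism : monoid_morphism conj_rmorph.
Proof.
split=> [|x y]; first by rewrite /conj_rmorph rmorph1 mulr1.
by rewrite /conj_rmorph rmorphM -!mulrA (mulrA u) uK mul1r.
Qed.

HB.instance Definition _ :=
  GRing.isZmodMorphism.Build B T conj_rmorph conj_rmorph_is_zmod_morphism.
HB.instance Definition _ :=
  GRing.isMonoidMorphism.Build B T conj_rmorph conj_rmorph_is_monoid_morphism.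

Lemma conj_rmorph_fix b : conj_rmorph b = phi b <-> GRing.comm u (phi b).
Proof.
rewrite /GRing.comm /conj_rmorph; split=> [bE|ub].
  by rewrite -{1}bE !mulrA uK mul1r.
by rewrite -mulrA -ub mulrA u'K mul1r.
Qed.

Lemma ring_epi_comm (A : pzRingType) (f : {rmorphism A -> B}) :
  ring_epi f -> (forall a, GRing.comm u (phi (f a))) ->
  forall b, GRing.comm u (phi b).
Proof.
move=> epi comm_fA b; apply/conj_rmorph_fix/esym.
by apply: epi => a; apply/esym/conj_rmorph_fix.
Qed.

End ConjugateMorphism.

Section ScaleEndomorphism.
Variables (B : pzRingType) (W : lmodType B^c).

Definition scale_end (b : B) : add_end W :=
  @add_end_of _ (fun w => (b : B^c) *: w) (@scalerDr _ W (b : B^c)).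

Lemma scale_end_is_zmod_morphism : zmod_morphism scale_end.
Proof. by move=> a b; apply: add_end_ext => w; rewrite add_endBE /= scalerBl. Qed.

Lemma scale_end_is_monoid_morphism : monoid_morphism scale_end.
Proof.
split=> [|a b]; apply: add_end_ext => w.
  by rewrite add_end1E /= scale1r.
by rewrite add_endME /= scalerA.
Qed.

HB.instance Definition _ := GRing.isZmodMorphism.Build B (add_end W)
  scale_end scale_end_is_zmod_morphism.
HB.instance Definition _ := GRing.isMonoidMorphism.Build B (add_end W)
  scale_end scale_end_is_monoid_morphism.

End ScaleEndomorphism.

Section Shear.
Variables (B : pzRingType) (M N : lmodType B^c) (g : M -> N).
Hypothesis gD : {morph g : x y / x + y}.

Definition shear_fun (c : int) (p : (M * N)%type) : (M * N)%type :=
  (p.1, p.2 + g p.1 *~ c).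

Lemma shear_funD c : {morph shear_fun c : p q / p + q}.
Proof.
by move=> [m n] [m' n']; rewrite /shear_fun /= gD mulrzDl addrACA.
Qed.

Definition shear c : add_end (M * N)%type := add_end_of (shear_funD c).

Lemma shearD c d : shear c * shear d = shear (c + d).
Proof.
apply: add_end_ext => -[m n]; rewrite add_endME /= /shear_fun /=.
by rewrite mulrzDr addrA.
Qed.

Lemma shear0 : shear 0 = 1.
Proof. by apply: add_end_ext => -[m n]; rewrite /= /shear_fun /= mulr0z addr0. Qed.

Lemma comm_shear_scale b :
  GRing.comm (shear 1) (scale_end (M * N)%type b) <->
  forall m, g ((b : B^c) *: m) = (b : B^c) *: g m.
Proof.
rewrite /GRing.comm; split=> [comm_b m | gZ].
  have /(congr1 (fun h : add_end (M * N)%type => (h (m, 0)).2)) := comm_b.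
  by rewrite !add_endME /= /shear_fun /= scaler0 !add0r => ->.
apply: add_end_ext => -[m n]; rewrite !add_endME /= /shear_fun /=.
by rewrite !mulr1z gZ -scalerDr.
Qed.

End Shear.

Lemma ring_epi_linear (A B : pzRingType) (f : {rmorphism A -> B})
    (M N : lmodType B^c) (g : M -> N) :
  ring_epi f -> A_linear f g -> B_linear g.
Proof.
move=> epi [gD gA]; split=> // b m.
have shearK : shear gD 1 * shear gD (-1) = 1 by rewrite shearD subrr shear0.
have shearKV : shear gD (-1) * shear gD 1 = 1 by rewrite shearD addNr shear0.
apply/(comm_shear_scale gD b): m.
by apply: (ring_epi_comm shearK shearKV epi) => a; apply/comm_shear_scale.
Qed.

Section Span.
Variables (B : pzRingType) (L : lmodType B^c) (n : nat) (v : 'I_n -> L).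

Definition span_mem : {pred L} := fun x => `[< in_span v x >].

Lemma span_memP x : reflect (in_span v x) (x \in span_mem).
Proof. exact: asboolP. Qed.

Lemma span_submod_closed : submod_closed span_mem.
Proof.
split=> [|b x y /span_memP[c ->] /span_memP[d ->]]; apply/span_memP.
  by exists (fun=> 0); rewrite big1 // => i _; rewrite scale0r.
exists (fun i => b * c i + d i); rewrite scaler_sumr -big_split.
by apply: eq_bigr => i _; rewrite scalerA scalerDl.
Qed.

HB.instance Definition _ :=
  GRing.isSubmodClosed.Build _ L span_mem span_submod_closed.

Record span_submod := SpanSubmod {
  span_submod_val :> L;
  _ : span_submod_val \in span_mem
}.

HB.instance Definition _ := [isSub for span_submod_val].
HB.instance Definition _ := [Choice of span_submod by <:].
HB.instance Definition _ := [SubChoice_isSubLmodule of span_submod by <:].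

Definition span_elem x (xS : in_span v x) := SpanSubmod (introT (span_memP x) xS).

Lemma in_span_gen i : in_span v (v i).
Proof.
exists (fun j => (j == i)%:R); rewrite (bigD1 i) //= eqxx scale1r big1 ?addr0 //.
by move=> j /negbTE ->; rewrite scale0r.
Qed.

Lemma span_submod_fin_gen : fin_gen span_submod.
Proof.
exists n, (fun i => span_elem (in_span_gen i)).
case=> x xS; have /span_memP[c xE] := xS; exists c; apply: val_inj.
rewrite /= xE -[RHS]/(val _) linear_sum.
by apply: eq_bigr => i _; rewrite linearZ.
Qed.

End Span.

Section RestrictionOfScalars.
Variables (B T : pzRingType).

(* The unused argument only keys the canonical right B-module structure below. *)
Definition rmod_via (_ : {rmorphism B -> T}) : Type := T.

Variable r : {rmorphism B -> T}.

HB.instance Definition _ := GRing.Zmodule.copy (rmod_via r) T.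

Definition scale_via (b : B^c) (t : rmod_via r) : rmod_via r := (t : T) * r b.

Lemma scale_viaA a b t : scale_via a (scale_via b t) = scale_via (a * b) t.
Proof. by rewrite /scale_via -mulrA -rmorphM. Qed.
Lemma scale_via1 : left_id 1 scale_via.
Proof. by move=> t; rewrite /scale_via rmorph1 mulr1. Qed.
Lemma scale_viaDr : right_distributive scale_via +%R.
Proof. by move=> a s t; rewrite /scale_via mulrDl. Qed.
Lemma scale_viaDl t : {morph scale_via^~ t : a b / a + b}.
Proof. by move=> a b; rewrite /scale_via rmorphD mulrDr. Qed.

HB.instance Definition _ := GRing.Zmodule_isLmodule.Build B^c (rmod_via r)
  scale_viaA scale_via1 scale_viaDr scale_viaDl.

Lemma scale_viaE (b : B^c) (t : rmod_via r) : b *: t = (t : T) * r b.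
Proof. by []. Qed.

End RestrictionOfScalars.

Lemma regular_fin_gen (B : pzRingType) : fin_gen (B^c)^o.
Proof.
exists 1%N, (fun=> 1) => x; exists (fun=> x).
by rewrite big_ord1 [_ *: _]mulr1.
Qed.

Lemma regular_linearE (B : pzRingType) (L : lmodType B^c) (h : (B^c)^o -> L) :
  B_linear h -> forall b : B, h b = (b : B^c) *: h 1.
Proof. by move=> [_ hZ] b; rewrite -hZ [_ *: _]mulr1. Qed.

Theorem theorem8 (A B : pzRingType) (f : {rmorphism A -> B}) :
  ring_epi f <->
  ((forall M N : lmodType (B^c), fin_gen M -> fin_gen N ->
      forall g : M -> N, A_linear f g -> B_linear g) /\
   (forall (L : lmodType (B^c)) (psi : (B^c)^o -> L),
      A_linear (M := (B^c)^o) f psi ->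
      exists (n : nat) (v : 'I_n -> L), forall b : B, in_span v (psi b))).
Proof.
split=> [epi | [fg_linear fg_image] T r1 r2 r12 b].
  split=> [M N _ _ g | L psi /(ring_epi_linear epi) /regular_linearE psiE].
    exact: ring_epi_linear.
  by exists 1%N, (fun=> psi 1) => b; exists (fun=> b); rewrite big_ord1 psiE.
pose psi (b : (B^c)^o) : rmod_via r2 := r1 b.
have psiA : A_linear f psi.
  split=> [x y | a x]; rewrite /psi ?rmorphD //.
  by rewrite scale_viaE -r12 -rmorphM.
have [n [v psi_span]] := fg_image _ psi psiA.
pose g (b : (B^c)^o) := span_elem (psi_span b).
have gA : A_linear f g.
  by case: psiA => psiD psiZ; split=> *; apply: val_inj; rewrite /= ?psiD ?psiZ.
have gE := regular_linearE
  (fg_linear _ _ (regular_fin_gen B) (span_submod_fin_gen v) g gA).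
have /= psiE := congr1 val (gE b).
by rewrite -[r1 b]/(psi b) psiE scale_viaE /psi rmorph1 mul1r.
Qed.
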